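(* Consider a linear binary non-uniform subdivision scheme that is $C^\nu$-convergent for some $\nu>0$, with initial control points given by $\bar p^0\in\mathbb{R}^{n_0\times m}$ and level matrices $S^{[k]}\in\mathbb{R}^{n_k\times n_{k-1}}$ so that $\bar p^k=S^{[k]}\bar p^{k-1}$, with limit curve $p^\infty\subseteq\mathbb{R}^m$. Fix a positive integer $\rho$ and a constant $C>0$. Then for every base sequence $\{A_k\}$ with $A_k\in A^{n_k\times n_k,\rho}_C$, the matrices $A_kS^{[k]}S^{[k-1]}\cdots S^{[1]}\bar p^0=A_k\bar p^k\in\mathbb{R}^{n_k\times m}$ have row sets converging (in the Hausdorff metric) to the same limit, namely $p^\infty$.
   Context: $K^{\rho-1}_C=\{(x_1,\ldots,x_\rho)\in\mathbb{R}^\rho:\sum_ix_i=1,\ |x_i|\le C\}$. For $n_k>\rho$, $K^{n_k,\rho-1}_C$ is the set of row vectors of length $n_k$ of the form $(0,\ldots,0,v,0,\ldots,0)$ with $v\in K^{\rho-1}_C$ occupying $\rho$ consecutive positions. $A^{\ell\times n_k,\rho}_C$ is the set of $\ell\times n_k$ matrices whose rows all lie in $K^{n_k,\rho-1}_C$ and such that the sum of the rows has no zero entry. The limit curve $p^\infty$ is the Hausdorff limit of the sets of points $\mathrm{rows}(\bar p^k)$; $C^\nu$-convergence means that there is a $C^\nu$ function $f$ with $\sup_i|p^k_i-f(2^{-k}i)|\to0$. *)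

From Stdlib Require Import Reals Lra.
Open Scope R_scope.

(* Matrices / vectors are represented by functions on indices; sizes are explicit. *)
Definition mat := nat -> nat -> R.
Definition vec := nat -> R.

Fixpoint sumR (n : nat) (f : nat -> R) : R :=
  match n with
  | O => 0
  | S n' => sumR n' f + f n'
  end.

Definition matmul (inner : nat) (A B : mat) : mat :=
  fun i j => sumR inner (fun l => A i l * B l j).

Definition dist (m : nat) (x y : vec) : R :=
  sqrt (sumR m (fun j => (x j - y j) ^ 2)).

(* Control points of level k: pbar^0 = p0, pbar^k = S^[k] pbar^(k-1);
   Sm k is the n k x n (k-1) matrix S^[k]. *)
Fixpoint pbar (n : nat -> nat) (Sm : nat -> mat) (p0 : mat) (k : nat) : mat :=
  match k with
  | O => p0
  | S k' => matmul (n k') (Sm (S k')) (pbar n Sm p0 k')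
  end.

Fixpoint Cnu (nu : nat) (g : R -> R) : Prop :=
  match nu with
  | O => continuity g
  | S nu' => exists g' : R -> R,
      (forall x, derivable_pt_lim g x (g' x)) /\ Cnu nu' g'
  end.

Definition Cnu_convergent (nu m : nat) (n : nat -> nat) (Sm : nat -> mat) (p0 : mat) : Prop :=
  exists f : R -> vec,
    (forall j, (j < m)%nat -> Cnu nu (fun t => f t j)) /\
    forall eps, eps > 0 -> exists K, forall k, (K <= k)%nat ->
      forall i, (i < n k)%nat ->
        dist m (pbar n Sm p0 k i) (f (INR i / 2 ^ k)) < eps.

Definition binary_sizes (n : nat -> nat) : Prop :=
  exists c : nat, forall k, (n (S k) <= 2 * n k + c)%nat.

(* Row r of length nk lies in K^{nk,rho-1}_C: supported on rho consecutive
   positions s..s+rho-1, entries summing to 1, each of absolute value <= C. *)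
Definition in_K (nk rho : nat) (C : R) (r : vec) : Prop :=
  exists s : nat, (s + rho <= nk)%nat /\
    (forall j, (j < nk)%nat -> (j < s \/ s + rho <= j)%nat -> r j = 0) /\
    sumR rho (fun t => r (s + t)%nat) = 1 /\
    (forall t, (t < rho)%nat -> Rabs (r (s + t)%nat) <= C).

Definition in_A (l nk rho : nat) (C : R) (A : mat) : Prop :=
  (rho < nk)%nat /\
  (forall i, (i < l)%nat -> in_K nk rho C (A i)) /\
  (forall j, (j < nk)%nat -> sumR l (fun i => A i j) <> 0).

Definition rows_Hausdorff_cv (m : nat) (nr : nat -> nat) (M : nat -> mat)
    (L : vec -> Prop) : Prop :=
  forall eps, eps > 0 -> exists K, forall k, (K <= k)%nat ->
    (forall i, (i < nr k)%nat -> exists y, L y /\ dist m (M k i) y < eps) /\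
    (forall y, L y -> exists i, (i < nr k)%nat /\ dist m (M k i) y < eps).

From Pilot Require Import Defs.
From Stdlib Require Import Reals Lra Lia.
Open Scope R_scope.

(* Let P_k = pbar^k and let f be the limit function of the
   scheme, so that the row P_k i is uniformly close to f(i/2^k).
   1. Window oscillation: since n_k <= 2^k (n_0 + c), all sample points
      i/2^k lie in a fixed compact interval, on which f is uniformly
      continuous; rows of P_k whose indices differ by less than rho have
      parameters closer than rho/2^k -> 0, hence the rows themselves become
      uniformly close (coordinatewise, uniformly in the window).
   2. Affine averaging: a row of A_k is an affine combination (weights sum
      to 1, bounded by C) of rho consecutive rows of P_k, so the
      corresponding row of A_k P_k stays within m*rho*C*delta of any row in
      that window once the window oscillation is below delta.
   3. Hausdorff limit: every row of A_k P_k is thus near a row of P_k, hence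
      near p^inf; conversely a point of p^inf near the row P_k q is near any
      row of A_k whose window contains q, and such a row exists because the
      q-th column of A_k has a nonzero entry. *)

Lemma sumR_ext n f g : (forall i, (i < n)%nat -> f i = g i) -> sumR n f = sumR n g.
Proof.
  induction n as [|n IH]; simpl; intros H; [reflexivity|].
  rewrite IH by (intros; apply H; lia). rewrite H by lia. reflexivity.
Qed.

Lemma sumR_le n f g : (forall i, (i < n)%nat -> f i <= g i) -> sumR n f <= sumR n g.
Proof.
  induction n as [|n IH]; simpl; intros H; [lra|].
  assert (f n <= g n) by (apply H; lia).
  assert (sumR n f <= sumR n g) by (apply IH; intros; apply H; lia). lra.
Qed.

Lemma sumR_const n c : sumR n (fun _ => c) = INR n * c.
Proof. induction n as [|n IH]; simpl sumR; [simpl; lra|]. rewrite IH, S_INR. lra. Qed.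

Lemma sumR_zero n f : (forall i, (i < n)%nat -> f i = 0) -> sumR n f = 0.
Proof. intros H. rewrite (sumR_ext n f (fun _ => 0)) by auto. rewrite sumR_const; lra. Qed.

Lemma sumR_nonneg n f : (forall i, (i < n)%nat -> 0 <= f i) -> 0 <= sumR n f.
Proof. intros H. rewrite <- (sumR_zero n (fun _ => 0)) by auto. now apply sumR_le. Qed.

Lemma sumR_term n f j : (forall i, (i < n)%nat -> 0 <= f i) -> (j < n)%nat -> f j <= sumR n f.
Proof.
  induction n as [|n IH]; simpl; intros H Hj; [lia|].
  assert (0 <= sumR n f) by (apply sumR_nonneg; intros; apply H; lia).
  assert (0 <= f n) by (apply H; lia).
  destruct (Nat.eq_dec j n) as [->|Hne]; [lra|].
  assert (f j <= sumR n f) by (apply IH; [intros; apply H; lia | lia]). lra.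
Qed.

Lemma sumR_abs n f : Rabs (sumR n f) <= sumR n (fun i => Rabs (f i)).
Proof.
  induction n as [|n IH]; simpl; [rewrite Rabs_R0; lra|].
  eapply Rle_trans; [apply Rabs_triang | lra].
Qed.

Lemma sumR_add n f g : sumR n (fun i => f i + g i) = sumR n f + sumR n g.
Proof. induction n as [|n IH]; simpl; [lra|]. rewrite IH; lra. Qed.

Lemma sumR_scale n f c : sumR n (fun i => c * f i) = c * sumR n f.
Proof. induction n as [|n IH]; simpl; [lra|]. rewrite IH; lra. Qed.

Lemma sumR_split a b f : sumR (a + b) f = sumR a f + sumR b (fun t => f (a + t)%nat).
Proof.
  induction b as [|b IH]; simpl; [rewrite Nat.add_0_r; lra|].
  rewrite Nat.add_succ_r. simpl. rewrite IH. lra.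
Qed.

Lemma sumR_nonzero_term l f : sumR l f <> 0 -> exists i, (i < l)%nat /\ f i <> 0.
Proof.
  induction l as [|l IH]; simpl; intros H; [lra|].
  destruct (Req_dec (f l) 0) as [Hz|Hnz].
  - destruct IH as [i [Hi Hfi]]; [intro; apply H; lra|]. exists i; split; [lia|assumption].
  - exists l; split; [lia|assumption].
Qed.

Definition L1 m (x y : vec) : R := sumR m (fun j => Rabs (x j - y j)).

Lemma dist_coord m x y j : (j < m)%nat -> Rabs (x j - y j) <= Defs.dist m x y.
Proof.
  intros Hj. unfold Defs.dist. rewrite <- sqrt_Rsqr_abs. apply sqrt_le_1_alt.
  unfold Rsqr. replace ((x j - y j) * (x j - y j)) with ((x j - y j) ^ 2) by ring.
  apply (sumR_term m (fun l => (x l - y l) ^ 2)); auto.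
  intros; apply pow2_ge_0.
Qed.

Lemma dist_le_L1 m x y : Defs.dist m x y <= L1 m x y.
Proof.
  unfold Defs.dist, L1.
  assert (Hsq : sumR m (fun j => (x j - y j) ^ 2) <= (sumR m (fun j => Rabs (x j - y j))) ^ 2
                /\ 0 <= sumR m (fun j => Rabs (x j - y j))).
  { induction m as [|m [IH1 IH2]]; cbn [sumR]; [lra|].
    pose proof (Rabs_pos (x m - y m)).
    assert (Hab : (x m - y m) ^ 2 = Rabs (x m - y m) ^ 2)
      by (rewrite <- !Rsqr_pow2; apply Rsqr_abs).
    rewrite Hab. split; [nra | lra]. }
  destruct Hsq as [H1 H2]. rewrite <- (sqrt_pow2 _ H2). now apply sqrt_le_1_alt.
Qed.

Lemma L1_triangle m x y z : L1 m x z <= L1 m x y + L1 m y z.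
Proof.
  unfold L1. induction m as [|m IH]; simpl; [lra|].
  pose proof (Rabs_triang (x m - y m) (y m - z m)) as T.
  replace (x m - y m + (y m - z m)) with (x m - z m) in T by ring. lra.
Qed.

Lemma L1_bound m x y e : (forall j, (j < m)%nat -> Rabs (x j - y j) <= e) -> L1 m x y <= INR m * e.
Proof. intros H. unfold L1. rewrite <- sumR_const. now apply sumR_le. Qed.

Lemma L1_le_dist m x y : L1 m x y <= INR m * Defs.dist m x y.
Proof. apply L1_bound. intros; now apply dist_coord. Qed.

Lemma Rabs_three_steps a b x y : Rabs (a - b) <= Rabs (a - x) + Rabs (x - y) + Rabs (b - y).
Proof.
  replace (a - b) with ((a - x) + (x - y) - (b - y)) by ring.
  pose proof (Rabs_triang ((a - x) + (x - y)) (- (b - y))) as T1.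
  pose proof (Rabs_triang (a - x) (x - y)) as T2.
  rewrite Rabs_Ropp in T1. unfold Rminus at 1. lra.
Qed.

Lemma small_multiple a eps : 0 <= a -> eps > 0 -> exists d, d > 0 /\ a * d < eps.
Proof.
  intros Ha He. exists (eps / (a + 1)). split; [apply Rdiv_lt_0_compat; lra|].
  replace (a * (eps / (a + 1))) with (eps * (a / (a + 1))) by (field; lra).
  assert (a / (a + 1) < 1).
  { apply (Rmult_lt_reg_r (a + 1)); [lra|]. unfold Rdiv.
    rewrite Rmult_assoc, Rinv_l by lra. lra. }
  assert (0 <= a / (a + 1)) by (unfold Rdiv; apply Rmult_le_pos; [lra | left; apply Rinv_0_lt_compat; lra]). nra.
Qed.

Lemma INR_le_pow2 K : INR K <= 2 ^ K.
Proof.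
  induction K as [|K IH]; [simpl; lra|]. rewrite S_INR. simpl.
  assert (1 <= 2 ^ K) by (apply pow_R1_Rle; lra). lra.
Qed.

Lemma Cnu_continuous nu g : Cnu nu g -> continuity g.
Proof.
  destruct nu; simpl; [auto|]. intros [g' [Hd _]] x.
  apply derivable_continuous_pt. exists (g' x). apply Hd.
Qed.

Lemma common_delta m (P : nat -> R -> Prop) :
  (forall j d d', 0 < d' <= d -> P j d -> P j d') ->
  (forall j, (j < m)%nat -> exists d, d > 0 /\ P j d) ->
  exists d, d > 0 /\ forall j, (j < m)%nat -> P j d.
Proof.
  intros Hmono. induction m as [|m IH]; intros H.
  - exists 1; split; [lra | intros; lia].
  - destruct IH as [d1 [Hd1 H1]]; [intros; apply H; lia|].
    destruct (H m) as [d2 [Hd2 H2]]; [lia|].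
    assert (Hmin : 0 < Rmin d1 d2) by (apply Rmin_pos; lra).
    exists (Rmin d1 d2). split; [lra|]. intros j Hj.
    destruct (Nat.eq_dec j m) as [->|Hne].
    + apply Hmono with d2; [split; [lra | apply Rmin_r] | assumption].
    + apply Hmono with d1; [split; [lra | apply Rmin_l] | apply H1; lia].
Qed.

Lemma binary_sizes_grow n c : (forall k, (n (S k) <= 2 * n k + c)%nat) ->
  forall k, (n k + c <= 2 ^ k * (n 0%nat + c))%nat.
Proof.
  intros H k. induction k as [|k IH]; [simpl; lia|].
  rewrite Nat.pow_succ_r'. specialize (H k). nia.
Qed.

Lemma grid_bounded n : binary_sizes n -> exists N, forall k i, (i < n k)%nat ->
  0 <= INR i / 2 ^ k <= N.
Proof.
  intros [c Hc]. exists (INR (n 0%nat + c)). intros k i Hi.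
  assert (Hpos : 0 < 2 ^ k) by (apply pow_lt; lra).
  assert (Hsize : INR i <= 2 ^ k * INR (n 0%nat + c)).
  { replace (2 ^ k) with (INR (2 ^ k)) by (rewrite pow_INR; simpl; f_equal; lra).
    rewrite <- mult_INR. apply le_INR. pose proof (binary_sizes_grow n c Hc k). lia. }
  pose proof (pos_INR i). split.
  - unfold Rdiv; apply Rmult_le_pos; [lra | left; apply Rinv_0_lt_compat; lra].
  - apply (Rmult_le_reg_r (2 ^ k)); [assumption|]. unfold Rdiv.
    rewrite Rmult_assoc, Rinv_l by lra. lra.
Qed.

Lemma grid_resolution rho d : d > 0 -> exists K, forall k i i', (K <= k)%nat ->
  (i < i' + rho)%nat -> (i' < i + rho)%nat -> Rabs (INR i / 2 ^ k - INR i' / 2 ^ k) < d.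
Proof.
  intros Hd. destruct (INR_archimed d (INR rho) Hd) as [K HK].
  exists K. intros k i i' Hk Hi Hi'.
  assert (Hpos : 0 < 2 ^ k) by (apply pow_lt; lra).
  assert (2 ^ K <= 2 ^ k) by (apply Rle_pow; [lra | assumption]).
  pose proof (INR_le_pow2 K).
  assert (Hgap : Rabs (INR i - INR i') < INR rho).
  { apply lt_INR in Hi, Hi'. rewrite plus_INR in Hi, Hi'. apply Rabs_def1; lra. }
  replace (INR i / 2 ^ k - INR i' / 2 ^ k) with ((INR i - INR i') / 2 ^ k) by (field; lra).
  unfold Rdiv. rewrite Rabs_mult, Rabs_inv, (Rabs_right (2 ^ k)) by lra.
  apply (Rmult_lt_reg_r (2 ^ k)); [assumption|].
  rewrite Rmult_assoc, Rinv_l by lra. nra.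
Qed.

Lemma window_oscillation m (n : nat -> nat) (P : nat -> mat) (f : R -> vec) rho :
  binary_sizes n ->
  (forall j, (j < m)%nat -> continuity (fun t => f t j)) ->
  (forall eps, eps > 0 -> exists K, forall k, (K <= k)%nat ->
     forall i, (i < n k)%nat -> Defs.dist m (P k i) (f (INR i / 2 ^ k)) < eps) ->
  forall e, e > 0 -> exists K, forall k, (K <= k)%nat -> forall j i i',
    (j < m)%nat -> (i < n k)%nat -> (i' < n k)%nat ->
    (i < i' + rho)%nat -> (i' < i + rho)%nat -> Rabs (P k i j - P k i' j) < e.
Proof.
  intros Hsizes Hcont Hsample e He.
  assert (He3 : e / 3 > 0) by lra.
  destruct (grid_bounded n Hsizes) as [N HN].
  destruct (common_delta m (fun j d => forall x y, 0 <= x <= N -> 0 <= y <= N ->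
     Rabs (x - y) < d -> Rabs (f x j - f y j) < e / 3)) as [d [Hd Hunif]].
  { intros j d d' Hd' H x y Hx Hy Hxy. apply H; [assumption | assumption | lra]. }
  { intros j Hj.
    destruct (Heine (fun t => f t j) (fun t => 0 <= t <= N) (compact_P3 0 N)
                (fun x _ => Hcont j Hj x) (mkposreal _ He3)) as [[dd Hdd] Hucont].
    exists dd; split; assumption. }
  destruct (Hsample _ He3) as [K1 HK1].
  destruct (grid_resolution rho d Hd) as [K2 HK2].
  exists (Nat.max K1 K2). intros k Hk j i i' Hj Hi Hi' Hii' Hi'i.
  pose proof (Rle_lt_trans _ _ _ (dist_coord m _ _ j Hj) (HK1 k ltac:(lia) i Hi)).
  pose proof (Rle_lt_trans _ _ _ (dist_coord m _ _ j Hj) (HK1 k ltac:(lia) i' Hi')).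
  pose proof (Hunif j Hj _ _ (HN k i Hi) (HN k i' Hi') (HK2 k i i' ltac:(lia) Hii' Hi'i)).
  pose proof (Rabs_three_steps (P k i j) (P k i' j)
                (f (INR i / 2 ^ k) j) (f (INR i' / 2 ^ k) j)). lra.
Qed.

Definition window_row (nk rho : nat) (C : R) (r : vec) (s : nat) : Prop :=
  (s + rho <= nk)%nat /\
  (forall j, (j < nk)%nat -> (j < s \/ s + rho <= j)%nat -> r j = 0) /\
  sumR rho (fun t => r (s + t)%nat) = 1 /\
  (forall t, (t < rho)%nat -> Rabs (r (s + t)%nat) <= C).

Lemma in_K_window nk rho C r : in_K nk rho C r -> exists s, window_row nk rho C r s.
Proof. exact (fun H => H). Qed.

Lemma window_support nk rho C r s q : window_row nk rho C r s ->
  (q < nk)%nat -> r q <> 0 -> (s <= q /\ q < s + rho)%nat.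
Proof.
  intros [_ [Hzero _]] Hq Hnz.
  destruct (Nat.lt_ge_cases q s); [exfalso; apply Hnz, Hzero; lia|].
  destruct (Nat.lt_ge_cases q (s + rho)); [lia | exfalso; apply Hnz, Hzero; lia].
Qed.

Lemma window_row_average nk rho C r s (g : vec) q e :
  window_row nk rho C r s ->
  (forall t, (t < rho)%nat -> Rabs (g (s + t)%nat - g q) <= e) ->
  Rabs (sumR nk (fun l => r l * g l) - g q) <= INR rho * (C * e).
Proof.
  intros [Hs [Hzero [Hsum Hbound]]] Hosc.
  assert (Hwin : sumR nk (fun l => r l * g l) = sumR rho (fun t => r (s + t)%nat * g (s + t)%nat)).
  { replace nk with (s + (rho + (nk - s - rho)))%nat by lia. rewrite !sumR_split.
    rewrite (sumR_zero s), (sumR_zero (nk - s - rho)); [ring | |];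
      intros i Hi; rewrite Hzero by lia; ring. }
  assert (Hcentre : sumR rho (fun t => r (s + t)%nat * g (s + t)%nat) - g q
                    = sumR rho (fun t => r (s + t)%nat * (g (s + t)%nat - g q))).
  { rewrite (sumR_ext rho (fun t => r (s + t)%nat * (g (s + t)%nat - g q))
               (fun t => r (s + t)%nat * g (s + t)%nat + (- g q) * r (s + t)%nat))
      by (intros; ring).
    rewrite sumR_add, sumR_scale, Hsum. ring. }
  rewrite Hwin, Hcentre. eapply Rle_trans; [apply sumR_abs|].
  rewrite <- sumR_const. apply sumR_le. intros t Ht.
  rewrite Rabs_mult. apply Rmult_le_compat; auto using Rabs_pos.
Qed.

Lemma window_row_near m nk rho C r s (P : mat) q (y : vec) d :
  window_row nk rho C r s ->
  (forall j t, (j < m)%nat -> (t < rho)%nat -> Rabs (P (s + t)%nat j - P q j) <= d) ->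
  Defs.dist m (P q) y < d ->
  Defs.dist m (fun j => sumR nk (fun l => r l * P l j)) y <= INR m * (INR rho * C + 1) * d.
Proof.
  intros Hr Hosc Hy.
  assert (Hrow : L1 m (fun j => sumR nk (fun l => r l * P l j)) (P q) <= INR m * (INR rho * (C * d))).
  { apply L1_bound. intros j Hj. apply (window_row_average nk rho C r s (fun l => P l j));
      [assumption | intros; now apply Hosc]. }
  pose proof (L1_le_dist m (P q) y). pose proof (pos_INR m).
  assert (INR m * Defs.dist m (P q) y <= INR m * d) by (apply Rmult_le_compat_l; lra).
  eapply Rle_trans; [apply dist_le_L1|].
  eapply Rle_trans; [apply (L1_triangle m _ (P q))|]. nra.
Qed.

(* Step 3.  Choose delta with m (rho C + 1) delta < eps; for large k the window
   oscillation of P_k and the Hausdorff distance from rows(P_k) to p^inf are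
   both below delta, which gives both halves of the Hausdorff estimate. *)
Theorem mainTheorem11
  (m nu : nat) (n : nat -> nat) (Sm : nat -> mat) (p0 : mat)
  (pinf : vec -> Prop) (rho : nat) (C : R) (A : nat -> mat) :
  (0 < nu)%nat ->
  binary_sizes n ->
  Cnu_convergent nu m n Sm p0 ->
  rows_Hausdorff_cv m n (pbar n Sm p0) pinf ->
  (0 < rho)%nat -> C > 0 ->
  (exists K0, forall k, (K0 <= k)%nat -> in_A (n k) (n k) rho C (A k)) ->
  rows_Hausdorff_cv m n (fun k => matmul (n k) (A k) (pbar n Sm p0 k)) pinf.
Proof.
  intros _ Hsizes [f [Hf Hsample]] Hlim Hrho HC [K0 HA] eps Heps.
  assert (Hconst : 0 <= INR m * (INR rho * C + 1))
    by (apply Rmult_le_pos; [apply pos_INR|];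
        pose proof (Rmult_le_pos _ _ (pos_INR rho) (Rlt_le _ _ HC)); lra).
  destruct (small_multiple _ eps Hconst Heps) as [d [Hd Hdeps]].
  destruct (window_oscillation m n (pbar n Sm p0) f rho Hsizes
              (fun j Hj => Cnu_continuous nu _ (Hf j Hj)) Hsample d Hd) as [K1 Hosc].
  destruct (Hlim d Hd) as [K2 HK2].
  exists (Nat.max K0 (Nat.max K1 K2)). intros k Hk.
  destruct (HA k ltac:(lia)) as [_ [Hrows Hcols]].
  destruct (HK2 k ltac:(lia)) as [Hnear Hcover].
  assert (Hkey : forall i s q y, (i < n k)%nat -> window_row (n k) rho C (A k i) s ->
            (s <= q < s + rho)%nat -> Defs.dist m (pbar n Sm p0 k q) y < d ->
            Defs.dist m (matmul (n k) (A k) (pbar n Sm p0 k) i) y < eps).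
  { intros i s q y Hi Hs Hq Hy. pose proof Hs as [Hsn _].
    eapply Rle_lt_trans; [|exact Hdeps].
    apply (window_row_near m (n k) rho C (A k i) s _ q y d Hs); [|assumption].
    intros j t Hj Ht. left. apply Hosc; lia. }
  split.
  - intros i Hi. destruct (in_K_window _ _ _ _ (Hrows i Hi)) as [s Hs].
    pose proof Hs as [Hsn _].
    destruct (Hnear s ltac:(lia)) as [y [Hy Hdy]].
    exists y. split; [assumption|]. apply (Hkey i s s y); [assumption | assumption | lia | assumption].
  - intros y Hy. destruct (Hcover y Hy) as [q [Hq Hdq]].
    destruct (sumR_nonzero_term _ _ (Hcols q Hq)) as [i [Hi Hnz]].
    destruct (in_K_window _ _ _ _ (Hrows i Hi)) as [s Hs].
    exists i. split; [assumption|].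
    apply (Hkey i s q y Hi Hs); [exact (window_support _ _ _ _ _ _ Hs Hq Hnz) | assumption].
Qed.
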